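(* Let $q\in(0,1)$ and fix a real number $\sigma$. There is a constant $C>0$ depending only on $\sigma$ with the following property: for every positive integer $N$ and every $t\in\mathbb{C}\setminus\{a+2\pi i b/\log q : a,b\in\mathbb{Z},\ a\le 0\}$, for all real $v$ with $|v|$ sufficiently large, writing $s=\sigma+iv$, $$\left|\sum_{r=0}^{\infty}\binom{r+s-1}{r}\frac{q^{N(t+r)}}{1-q^{t+r}}\right|\le C\left[\frac{q^{N\Re(t)}}{|1-q^{t}|}+\frac{q^{N\Re(t)}\,e^{|\sigma+iv|}}{\inf_{r\in\mathbb{Z}_{\ge1}}|1-q^{t+r}|}\exp\left(\frac{\pi}{2}|v|\right)\left\{\frac{q^{N}}{1-q^{N}}+|v|^{-1/2}q^{N|v|}\left(1+\frac{1}{-N\log q}\right)\right\}\right].$$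
   Context: For $q\in(0,1)$, $q^w=e^{w\log q}$ for complex $w$. For complex $s$ and integer $r\ge0$, $\binom{r+s-1}{r}=\frac{s(s+1)\cdots(s+r-1)}{r!}=\frac{\Gamma(r+s)}{r!\,\Gamma(s)}$. The series on the left is the one appearing in the meromorphic continuation of $\zeta_q(s,t)=\sum_{m\ge1}q^{mt}\left(\frac{1-q^m}{1-q}\right)^{-s}$. *)

From Stdlib Require Import Reals.
From Coquelicot Require Export Coquelicot.
Open Scope R_scope.

Definition Cexp (z : C) : C :=
  (exp (fst z) * cos (snd z), exp (fst z) * sin (snd z)).

Definition qpow (q : R) (w : C) : C := Cexp (w * RtoC (ln q)).

Fixpoint rising (s : C) (r : nat) : C :=
  match r with
  | O => 1%C
  | S r' => (rising s r' * (s + RtoC (INR r')))%C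
  end.

(* generalized binomial coefficient binom(r+s-1, r) = s(s+1)...(s+r-1)/r! *)
Definition gbinom (s : C) (r : nat) : C :=
  (rising s r / RtoC (INR (Factorial.fact r)))%C.

Definition zeta_term (q : R) (s t : C) (N r : nat) : C :=
  (gbinom s r * qpow q (RtoC (INR N) * (t + RtoC (INR r)))
     / (1 - qpow q (t + RtoC (INR r))))%C.

Definition inf_dist (q : R) (t : C) : R :=
  real (Glb_Rbar (fun x => exists r : nat, (1 <= r)%nat /\
                     x = Cmod (1 - qpow q (t + RtoC (INR r)))%C)).

From Stdlib Require Import Reals Lra Lia Factorial.
From Coquelicot Require Import Coquelicot.
Open Scope R_scope.

(* Since binom(r+s-1, r) = prod_{k=1}^r (s+k-1)/k and |s+k-1|/k <= (1 + |sigma|/k) sqrt(1 + (v/k)^2),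
   the binomial coefficient splits into a factor of polynomial growth in r, summable against q^r,
   and a factor bounded uniformly in r by e^{5|v|/2 + 2}: the first J ~ |v| factors are at most 2J/k,
   whose product is (2J)^r/r! <= e^{2J}, and the remaining ones are at most e^{v^2/(2k^2)}, whose
   product telescopes to at most e^{v^2/(2J)}.  As |1 - q^{t+r}| is bounded below for r >= 1, the
   terms r >= 1 contribute O(q^{N Re t} q^N e^{5|v|/2} / inf_r |1 - q^{t+r}|), and e^{5|v|/2} is
   absorbed by e^{|s|} e^{pi|v|/2} for large |v| because 1 + pi/2 > 5/2. *)

Lemma exp_le_exp (x y : R) : x <= y -> exp x <= exp y.
Proof. intros [H | ->]; [left; apply exp_increasing, H | right; reflexivity]. Qed.

Lemma pow_le_base (q : R) (N : nat) : 0 < q -> q < 1 -> (1 <= N)%nat -> 0 < q ^ N <= q.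
Proof.
  intros hq0 hq1 hN. split; [apply pow_lt, hq0|].
  destruct N as [|N]; [lia|]. simpl.
  assert (q ^ N <= 1) by (rewrite <- (pow1 N); apply pow_incr; lra). nra.
Qed.

Lemma exists_nat_between (A : R) : 0 <= A ->
  exists J : nat, (1 <= J)%nat /\ A <= INR J <= A + 1.
Proof.
  intros hA. destruct (archimed A) as [hup hup1].
  assert (hz : (0 < up A)%Z) by (apply lt_IZR; lra).
  exists (Z.to_nat (up A)). rewrite INR_IZR_INZ, Znat.Z2Nat.id by lia.
  split; [lia | lra].
Qed.

Lemma pow_div_fact_le_exp (c : R) (r : nat) : 0 <= c -> c ^ r / INR (fact r) <= exp c.
Proof.
  intros hc. eapply Rle_trans; [|apply (exp_ge_taylor c r hc)].
  destruct r as [|r]; [simpl; lra|].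
  rewrite tech5.
  assert (0 <= sum_f_R0 (fun k => c ^ k / INR (fact k)) r).
  { apply cond_pos_sum. intros k. apply Rdiv_le_0_compat; [apply pow_le, hc | apply INR_fact_lt_0]. }
  lra.
Qed.

Lemma sqrt_1_plus_sq_le_exp (a : R) : sqrt (1 + a ^ 2) <= exp (a ^ 2 / 2).
Proof.
  eapply Rle_trans; [|apply exp_ineq1_le].
  rewrite <- (sqrt_pow2 (1 + a ^ 2 / 2)) by nra.
  apply sqrt_le_1_alt. nra.
Qed.

Lemma Series_nonneg (a : nat -> R) :
  ex_series a -> (forall n, 0 <= a n) -> 0 <= Series a.
Proof.
  intros Ha Hpos. rewrite <- (Rmult_0_l (Series a)), <- Series_scal_l.
  apply Series_le; [|exact Ha]. intros n. rewrite Rmult_0_l. split; [lra | apply Hpos].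
Qed.

Lemma Cmod_series_le (a : nat -> C) (b : nat -> R) (L : C) :
  is_series a L -> ex_series b -> (forall n, Cmod (a n) <= b n) ->
  Cmod L <= Series b.
Proof.
  intros HL Hb Hab.
  assert (HaL : is_lim_seq (fun n => Cmod (sum_n a n)) (Cmod L)).
  { exact (filterlim_comp _ _ _ _ _ _ _ _ HL
             (@filterlim_norm C_AbsRing C_NormedModule L)). }
  assert (Hsum : forall n, Cmod (sum_n a n) <= sum_n b n).
  { intros n. eapply Rle_trans.
    - apply (@norm_sum_n_m C_AbsRing C_NormedModule).
    - apply sum_n_m_le. intros k. apply Hab. }
  assert (Hb' : is_lim_seq (sum_n b) (Series b)) by exact (Series_correct _ Hb).
  exact (is_lim_seq_le _ _ _ _ Hsum HaL Hb').
Qed.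

Lemma is_series_Cmod_le_head_tail (a : nat -> C) (c : nat -> R) (K : R) :
  ex_series c -> (forall r, Cmod (a (S r)) <= K * c r) ->
  exists L, is_series a L /\ Cmod L <= Cmod (a O) + K * Series c.
Proof.
  intros Hc Hac.
  set (b r := match r with O => Cmod (a O) | S r' => K * c r' end).
  assert (Hab : forall r, Cmod (a r) <= b r) by (intros [|r]; [simpl; lra | apply Hac]).
  assert (Hb : ex_series b).
  { apply ex_series_incr_1.
    exact (@ex_series_scal_l R_AbsRing R_NormedModule K c Hc). }
  destruct (ex_series_le a b Hab Hb) as [L HL].
  exists L. split; [exact HL|].
  rewrite <- Series_scal_l.
  replace (Cmod (a O) + Series (fun r => K * c r)) with (Series b).
  - exact (Cmod_series_le a b L HL Hb Hab).
  - rewrite (Series_incr_1 b Hb). reflexivity.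
Qed.

Lemma pos_seq_lower_bound (f : nat -> R) (K : nat) (m : R) :
  (forall n, 0 < f n) -> 0 < m -> (forall n, (K <= n)%nat -> m <= f n) ->
  exists m', 0 < m' /\ forall n, m' <= f n.
Proof.
  intros hf. revert m. induction K as [|K IH]; intros m hm Hm.
  - exists m. split; [exact hm|]. intros n. apply Hm. lia.
  - apply (IH (Rmin m (f K))).
    + apply Rmin_glb_lt; auto.
    + intros n hn. destruct (Nat.eq_dec n K) as [->|hnK].
      * apply Rmin_r.
      * eapply Rle_trans; [apply Rmin_l | apply Hm; lia].
Qed.

Lemma Glb_Rbar_seq_bounds (f : nat -> R) (m : R) :
  (forall r, (1 <= r)%nat -> m <= f r) ->
  let g := real (Glb_Rbar (fun x => exists r, (1 <= r)%nat /\ x = f r)) in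
  m <= g /\ forall r, (1 <= r)%nat -> g <= f r.
Proof.
  intros Hm g.
  set (E := fun x => exists r, (1 <= r)%nat /\ x = f r) in g.
  destruct (Glb_Rbar_correct E) as [Hlb Hglb].
  assert (HE : forall r, (1 <= r)%nat -> E (f r)) by (intros r hr; exists r; auto).
  assert (Hmg : Rbar_le m (Glb_Rbar E)).
  { apply Hglb. intros x [r [hr ->]]. apply Hm, hr. }
  assert (Hg1 := Hlb _ (HE 1%nat (le_n 1))).
  unfold g. destruct (Glb_Rbar E) as [l| |]; simpl in *; try contradiction.
  split; [exact Hmg|]. intros r hr. exact (Hlb _ (HE r hr)).
Qed.

Lemma Cmod_Cexp (z : C) : Cmod (Cexp z) = exp (fst z).
Proof.
  destruct z as [x y]. unfold Cexp, Cmod. simpl.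
  replace (exp x * cos y * (exp x * cos y * 1) + exp x * sin y * (exp x * sin y * 1))
    with (exp x ^ 2 * (Rsqr (sin y) + Rsqr (cos y))) by (unfold Rsqr; ring).
  rewrite sin2_cos2, Rmult_1_r. apply sqrt_pow2. left. apply exp_pos.
Qed.

Lemma Cmod_qpow (q : R) (w : C) : Cmod (qpow q w) = Rpower q (fst w).
Proof.
  unfold qpow, Rpower. rewrite Cmod_Cexp. destruct w. simpl. f_equal. ring.
Qed.

Lemma Cexp_eq_1 (z : C) : Cexp z = 1%C ->
  fst z = 0 /\ exists k : Z, snd z = 2 * PI * IZR k.
Proof.
  destruct z as [x y]. unfold Cexp. intros H. injection H. clear H. simpl.
  intros Hs Hc.
  assert (he := exp_pos x).
  assert (hsin : sin y = 0) by (apply Rmult_integral in Hs; destruct Hs; [lra | auto]).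
  assert (hcos : cos y = 1).
  { assert (hsc := sin2_cos2 y). rewrite hsin in hsc. unfold Rsqr in hsc.
    assert (0 < cos y) by nra. nra. }
  split.
  - rewrite <- (ln_exp x), <- ln_1. f_equal. rewrite hcos in Hc. lra.
  - assert (hhalf : sin (y / 2) = 0).
    { assert (E := cos_2a_sin (y / 2)).
      replace (2 * (y / 2)) with y in E by field. nra. }
    destruct (sin_eq_0_0 _ hhalf) as [k hk]. exists k. lra.
Qed.

Lemma qpow_eq_1 (q : R) (w : C) : 0 < q -> q < 1 -> qpow q w = 1%C ->
  fst w = 0 /\ exists k : Z, snd w = 2 * PI * IZR k / ln q.
Proof.
  intros hq0 hq1 H.
  assert (hl : ln q < 0) by (rewrite <- ln_1; apply ln_increasing; lra).
  destruct (Cexp_eq_1 _ H) as [h1 [k hk]].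
  destruct w as [w1 w2]. simpl in h1, hk.
  split.
  - simpl. apply (Rmult_eq_reg_r (ln q)); lra.
  - exists k. simpl. field_simplify; [|lra].
    apply (Rmult_eq_reg_r (ln q)); [|lra]. field_simplify; lra.
Qed.

Fixpoint prod_1n (f : nat -> R) (r : nat) : R :=
  match r with O => 1 | S r' => prod_1n f r' * f r end.

Lemma prod_1n_S (f : nat -> R) (r : nat) : prod_1n f (S r) = prod_1n f r * f (S r).
Proof. reflexivity. Qed.

Lemma prod_1n_nonneg (f : nat -> R) (r : nat) :
  (forall k, (1 <= k <= r)%nat -> 0 <= f k) -> 0 <= prod_1n f r.
Proof.
  induction r as [|r IH]; intros Hf; simpl; [lra|].
  apply Rmult_le_pos; [apply IH; intros k hk; apply Hf | apply Hf]; lia.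
Qed.

Lemma prod_1n_pos (f : nat -> R) (r : nat) :
  (forall k, (1 <= k <= r)%nat -> 0 < f k) -> 0 < prod_1n f r.
Proof.
  induction r as [|r IH]; intros Hf; simpl; [lra|].
  apply Rmult_lt_0_compat; [apply IH; intros k hk; apply Hf | apply Hf]; lia.
Qed.

Lemma prod_1n_le (f g : nat -> R) (r : nat) :
  (forall k, (1 <= k <= r)%nat -> 0 <= f k <= g k) -> prod_1n f r <= prod_1n g r.
Proof.
  induction r as [|r IH]; intros Hfg; simpl; [lra|].
  assert (Hf := Hfg (S r) ltac:(lia)).
  apply Rmult_le_compat; [| lra | apply IH | lra].
  - apply prod_1n_nonneg. intros k hk. apply Hfg. lia.
  - intros k hk. apply Hfg. lia.
Qed.

Lemma prod_1n_mul (f g : nat -> R) (r : nat) :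
  prod_1n (fun k => f k * g k) r = prod_1n f r * prod_1n g r.
Proof. induction r as [|r IH]; simpl; [ring | rewrite IH; ring]. Qed.

Lemma prod_1n_add (f : nat -> R) (J m : nat) :
  prod_1n f (J + m) = prod_1n f J * prod_1n (fun k => f (J + k)%nat) m.
Proof.
  induction m as [|m IH]; simpl.
  - rewrite Nat.add_0_r. ring.
  - rewrite Nat.add_succ_r. simpl. rewrite IH. ring.
Qed.

Lemma prod_1n_div_INR (c : R) (r : nat) :
  prod_1n (fun k => c / INR k) r = c ^ r / INR (fact r).
Proof.
  induction r as [|r IH]; [simpl; lra|].
  rewrite prod_1n_S, IH, fact_simpl, mult_INR. simpl pow.
  assert (0 < INR (fact r)) by apply INR_fact_lt_0.
  assert (0 < INR (S r)) by (apply lt_0_INR; lia).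
  field. lra.
Qed.

Lemma prod_1n_exp_telescope (u : nat -> R) (m : nat) :
  prod_1n (fun k => exp (u (k - 1)%nat - u k)) m = exp (u O - u m).
Proof.
  induction m as [|m IH].
  - simpl. rewrite Rminus_diag, exp_0. reflexivity.
  - rewrite prod_1n_S, IH, <- exp_plus. f_equal. simpl. rewrite Nat.sub_0_r. ring.
Qed.

Lemma Cmod_gbinom (s : C) (r : nat) :
  Cmod (gbinom s r) = prod_1n (fun k => Cmod (s + RtoC (INR k - 1)) / INR k) r.
Proof.
  assert (hfact : RtoC (INR (fact r)) <> 0%C).
  { intros H. apply (INR_fact_neq_0 r). now injection H. }
  unfold gbinom. rewrite Cmod_div by exact hfact.
  rewrite Cmod_R, Rabs_pos_eq by apply pos_INR. clear hfact.
  induction r as [|r IH]; [simpl; rewrite Cmod_1; lra|].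
  rewrite prod_1n_S, <- IH, S_INR. simpl rising. rewrite Cmod_mult, fact_simpl, mult_INR.
  replace (INR r + 1 - 1) with (INR r) by ring.
  assert (0 < INR (fact r)) by apply INR_fact_lt_0.
  assert (0 < INR (S r)) by (apply lt_0_INR; lia).
  rewrite S_INR in *. field. lra.
Qed.

Lemma Cmod_shift_div_le (sigma v : R) (k : nat) : (1 <= k)%nat ->
  Cmod ((sigma, v) + RtoC (INR k - 1)) / INR k
  <= (1 + Rabs sigma / INR k) * sqrt (1 + (Rabs v / INR k) ^ 2).
Proof.
  intros hk. set (n := INR k). set (c := Rabs sigma). set (w := Rabs v / n).
  assert (hn : 1 <= n) by (apply (le_INR 1); exact hk).
  assert (hc : 0 <= c) by apply Rabs_pos.
  assert (hw : 0 <= w) by (apply Rdiv_le_0_compat; [apply Rabs_pos | lra]).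
  assert (hv : v ^ 2 = n ^ 2 * w ^ 2).
  { unfold w. rewrite <- (pow2_abs v). field. lra. }
  assert (hsig : (sigma + (n - 1)) ^ 2 <= (n + c) ^ 2).
  { rewrite <- (pow2_abs (sigma + (n - 1))). apply pow_incr. split; [apply Rabs_pos|].
    eapply Rle_trans; [apply Rabs_triang|]. rewrite (Rabs_pos_eq (n - 1)); unfold c; lra. }
  assert (key : Cmod ((sigma, v) + RtoC (n - 1)) <= (n + c) * sqrt (1 + w ^ 2)).
  { rewrite <- (sqrt_pow2 (n + c)) by lra. rewrite <- sqrt_mult by nra.
    apply sqrt_le_1_alt. simpl. nra. }
  apply (Rmult_le_reg_r n); [lra|]. unfold Rdiv.
  rewrite Rmult_assoc, Rinv_l by lra.
  replace ((1 + c * / n) * sqrt (1 + w ^ 2) * n) with ((n + c) * sqrt (1 + w ^ 2))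
    by (field; lra).
  lra.
Qed.

Lemma Cmod_gbinom_le (sigma v : R) (r : nat) :
  Cmod (gbinom (sigma, v) r)
  <= prod_1n (fun k => 1 + Rabs sigma / INR k) r
     * prod_1n (fun k => sqrt (1 + (Rabs v / INR k) ^ 2)) r.
Proof.
  rewrite Cmod_gbinom, <- prod_1n_mul. apply prod_1n_le. intros k hk. split.
  - apply Rdiv_le_0_compat; [apply Cmod_ge_0 | apply lt_0_INR; lia].
  - apply Cmod_shift_div_le. lia.
Qed.

Lemma prod_sqrt_head (A : R) (J r : nat) : 0 <= A -> A <= INR J -> (r <= J)%nat ->
  prod_1n (fun k => sqrt (1 + (A / INR k) ^ 2)) r <= exp (2 * INR J).
Proof.
  intros hA hAJ hrJ.
  eapply Rle_trans; [|apply (pow_div_fact_le_exp (2 * INR J) r); lra].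
  rewrite <- prod_1n_div_INR. apply prod_1n_le. intros k hk.
  assert (hn : 1 <= INR k) by (apply (le_INR 1); lia).
  assert (hkJ : INR k <= INR J) by (apply le_INR; lia).
  split; [apply sqrt_pos|].
  set (a := A / INR k). set (b := INR J / INR k).
  assert (hab : 0 <= a <= b).
  { unfold a, b. split; [apply Rdiv_le_0_compat; lra|].
    apply Rmult_le_compat_r; [left; apply Rinv_0_lt_compat|]; lra. }
  assert (hb : 1 <= b).
  { unfold b. apply (Rmult_le_reg_r (INR k)); [lra|]. field_simplify; lra. }
  replace (2 * INR J / INR k) with (2 * b) by (unfold b; field; lra).
  rewrite <- (sqrt_pow2 (2 * b)) by lra. apply sqrt_le_1_alt. nra.
Qed.

Lemma prod_sqrt_tail (A : R) (J m : nat) : 0 <= A -> A <= INR J -> (1 <= J)%nat ->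
  prod_1n (fun k => sqrt (1 + (A / INR (J + k)) ^ 2)) m <= exp (A / 2).
Proof.
  intros hA hAJ hJ.
  assert (hJ1 : 1 <= INR J) by (apply (le_INR 1); exact hJ).
  set (u i := A ^ 2 / 2 / INR (J + i)).
  assert (hu : forall i, 0 <= u i).
  { intros i. unfold u. apply Rdiv_le_0_compat; [nra | apply lt_0_INR; lia]. }
  eapply Rle_trans.
  - apply (prod_1n_le _ (fun k => exp (u (k - 1)%nat - u k))). intros k hk.
    split; [apply sqrt_pos|]. eapply Rle_trans; [apply sqrt_1_plus_sq_le_exp|].
    apply exp_le_exp. unfold u.
    set (n := INR (J + k)).
    assert (hn : 2 <= n) by (apply (le_INR 2); lia).
    replace (INR (J + (k - 1))) with (n - 1)
      by (unfold n; replace (J + k)%nat with (S (J + (k - 1))) by lia; rewrite S_INR; ring).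
    assert (hgap : A ^ 2 / 2 / (n - 1) - A ^ 2 / 2 / n - (A / n) ^ 2 / 2
                = A ^ 2 / (2 * n ^ 2 * (n - 1))) by (field; lra).
    assert (0 <= A ^ 2 / (2 * n ^ 2 * (n - 1))) by (apply Rdiv_le_0_compat; nra).
    lra.
  - rewrite prod_1n_exp_telescope. apply exp_le_exp.
    assert (u O <= A / 2).
    { unfold u. rewrite Nat.add_0_r. apply (Rmult_le_reg_r (INR J)); [lra|].
      field_simplify; nra. }
    specialize (hu m). lra.
Qed.

Lemma prod_sqrt_le_exp (A : R) (r : nat) : 0 <= A ->
  prod_1n (fun k => sqrt (1 + (A / INR k) ^ 2)) r <= exp (5 / 2 * A + 2).
Proof.
  intros hA. destruct (exists_nat_between A hA) as [J [hJ [hAJ hJA]]].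
  assert (hexp : exp (2 * INR J + A / 2) <= exp (5 / 2 * A + 2)) by (apply exp_le_exp; lra).
  destruct (Nat.le_gt_cases r J) as [hrJ | hJr].
  - eapply Rle_trans; [apply (prod_sqrt_head A J r hA hAJ hrJ)|].
    eapply Rle_trans; [|exact hexp]. apply exp_le_exp. lra.
  - replace r with (J + (r - J))%nat by lia. rewrite prod_1n_add.
    eapply Rle_trans; [|exact hexp]. rewrite exp_plus.
    apply Rmult_le_compat.
    + apply prod_1n_nonneg. intros k _. apply sqrt_pos.
    + apply prod_1n_nonneg. intros k _. apply sqrt_pos.
    + apply (prod_sqrt_head A J J hA hAJ (le_n J)).
    + apply (prod_sqrt_tail A J _ hA hAJ hJ).
Qed.

Lemma prod_1n_harmonic_pos (c : R) (r : nat) : 0 <= c ->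
  0 < prod_1n (fun k => 1 + c / INR k) r.
Proof.
  intros hc. apply prod_1n_pos. intros k hk.
  assert (0 <= c / INR k) by (apply Rdiv_le_0_compat; [exact hc | apply lt_0_INR; lia]).
  lra.
Qed.

Lemma ex_series_prod_1n_pow (c q : R) : 0 <= c -> 0 < q -> q < 1 ->
  ex_series (fun r => prod_1n (fun k => 1 + c / INR k) (S r) * q ^ r).
Proof.
  intros hc hq0 hq1.
  set (G := prod_1n (fun k => 1 + c / INR k)).
  set (a r := G (S r) * q ^ r).
  assert (hG : forall r, 0 < G r) by (intros r; apply prod_1n_harmonic_pos, hc).
  assert (ha : forall r, 0 < a r).
  { intros r. apply Rmult_lt_0_compat; [apply hG | apply pow_lt, hq0]. }
  apply (ex_series_ext (fun r => Rabs (a r))).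
  { intros r. apply Rabs_pos_eq. left. apply ha. }
  apply (ex_series_DAlembert a q hq1); [intros r; specialize (ha r); lra|].
  assert (Hratio : forall r, Rabs (a (S r) / a r) = (1 + c / INR (S (S r))) * q).
  { intros r.
    assert (hcr : 0 <= c / INR (S (S r)))
      by (apply Rdiv_le_0_compat; [exact hc | apply lt_0_INR; lia]).
    replace (a (S r) / a r) with ((1 + c / INR (S (S r))) * q).
    - apply Rabs_pos_eq. nra.
    - unfold a, G. rewrite (prod_1n_S _ (S r)). simpl pow. field.
      split; [apply not_0_INR; lia | split; [apply pow_nonzero; lra | apply Rgt_not_eq, hG]]. }
  apply (is_lim_seq_ext _ _ _ (fun r => eq_sym (Hratio r))).
  assert (Hinf : is_lim_seq (fun r => INR (S (S r))) p_infty).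
  { apply (is_lim_seq_ext (fun r => INR (r + 2))); [intros r; f_equal; lia|].
    apply (is_lim_seq_incr_n INR 2). apply is_lim_seq_INR. }
  assert (Hl := is_lim_seq_mult' _ _ _ _
     (is_lim_seq_plus' _ _ _ _ (is_lim_seq_const 1)
        (is_lim_seq_mult' _ _ _ _ (is_lim_seq_const c) (is_lim_seq_inv _ _ Hinf ltac:(discriminate))))
     (is_lim_seq_const q)).
  replace ((1 + c * 0) * q) with q in Hl by ring.
  exact Hl.
Qed.

Section ZetaTerms.

Variables (q : R) (t : C).
Hypotheses (hq0 : 0 < q) (hq1 : q < 1)
  (Ht : ~ (exists a b : Z, (a <= 0)%Z /\ t = (IZR a, 2 * PI * IZR b / ln q))).

Lemma qpow_shift_neq_1 (r : nat) : qpow q (t + RtoC (INR r)) <> 1%C.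
Proof.
  intros H. destruct (qpow_eq_1 q _ hq0 hq1 H) as [h1 [k hk]].
  apply Ht. exists (- Z.of_nat r)%Z, k. split; [lia|].
  destruct t as [t1 t2]. simpl in h1, hk.
  rewrite opp_IZR, <- INR_IZR_INZ. f_equal; lra.
Qed.

Lemma Cmod_1_sub_qpow_shift_pos (r : nat) :
  0 < Cmod (1 - qpow q (t + RtoC (INR r))).
Proof.
  apply Cmod_gt_0. intros H. apply (qpow_shift_neq_1 r).
  replace (qpow q (t + RtoC (INR r))) with (1 - (1 - qpow q (t + RtoC (INR r))))%C
    by ring.
  rewrite H. ring.
Qed.

Lemma Cmod_1_sub_qpow_shift_large : exists K : nat, forall r, (K <= r)%nat ->
  1 / 2 <= Cmod (1 - qpow q (t + RtoC (INR r))).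
Proof.
  assert (hl : ln q < 0) by (rewrite <- ln_1; apply ln_increasing; lra).
  destruct (INR_archimed 1 (ln (1 / 2) / ln q - fst t)) as [K HK]; [lra|].
  exists K. intros r hr. apply le_INR in hr.
  set (z := qpow q (t + RtoC (INR r))).
  assert (hz : Cmod z <= 1 / 2).
  { unfold z. rewrite Cmod_qpow. unfold Rpower.
    rewrite <- (exp_ln (1 / 2)) by lra. apply exp_le_exp.
    replace (ln (1 / 2)) with (ln (1 / 2) / ln q * ln q) by (field; lra).
    destruct t as [t1 t2]. simpl in *. nra. }
  assert (Htri := Cmod_triangle (1 - z) z).
  replace (1 - z + z)%C with (RtoC 1) in Htri by ring.
  rewrite Cmod_1 in Htri. lra.
Qed.

Lemma inf_dist_spec : 0 < inf_dist q t /\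
  forall r, (1 <= r)%nat -> inf_dist q t <= Cmod (1 - qpow q (t + RtoC (INR r))).
Proof.
  set (f r := Cmod (1 - qpow q (t + RtoC (INR r)))).
  destruct Cmod_1_sub_qpow_shift_large as [K HK].
  destruct (pos_seq_lower_bound f K (1 / 2) Cmod_1_sub_qpow_shift_pos) as [m [hm Hm]];
    [lra | exact HK |].
  destruct (Glb_Rbar_seq_bounds f m (fun r _ => Hm r)) as [Hmg Hg].
  change (inf_dist q t) with (real (Glb_Rbar (fun x => exists r, (1 <= r)%nat /\ x = f r))).
  split; [lra | exact Hg].
Qed.

Lemma Cmod_zeta_term (s : C) (N r : nat) :
  Cmod (zeta_term q s t N r)
  = Cmod (gbinom s r) * (Rpower q (INR N * fst t) * (q ^ N) ^ r)
    / Cmod (1 - qpow q (t + RtoC (INR r))).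
Proof.
  unfold zeta_term.
  rewrite Cmod_div by apply Cmod_gt_0, Cmod_1_sub_qpow_shift_pos.
  rewrite Cmod_mult, Cmod_qpow, <- pow_mult, <- Rpower_pow, <- Rpower_plus by exact hq0.
  do 3 f_equal. rewrite mult_INR. destruct t. simpl. ring.
Qed.

Lemma Cmod_zeta_term_0 (s : C) (N : nat) :
  Cmod (zeta_term q s t N 0) = Rpower q (INR N * fst t) / Cmod (1 - qpow q t).
Proof.
  assert (hden := Cmod_1_sub_qpow_shift_pos 0).
  rewrite Cmod_zeta_term, Cmod_gbinom.
  change (INR 0) with 0 in *. rewrite Cplus_0_r in *. simpl. field. lra.
Qed.

Lemma Cmod_zeta_term_S_le (sigma v : R) (N r : nat) : (1 <= N)%nat ->
  Cmod (zeta_term q (sigma, v) t N (S r))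
  <= Rpower q (INR N * fst t) / inf_dist q t * exp (5 / 2 * Rabs v + 2) * q ^ N
     * (prod_1n (fun k => 1 + Rabs sigma / INR k) (S r) * q ^ r).
Proof.
  intros hN. rewrite Cmod_zeta_term.
  destruct inf_dist_spec as [hd Hd].
  set (Rq := Rpower q (INR N * fst t)).
  set (G := prod_1n (fun k => 1 + Rabs sigma / INR k) (S r)).
  set (E := exp (5 / 2 * Rabs v + 2)).
  assert (hRq : 0 < Rq) by apply exp_pos.
  assert (hqN := pow_le_base q N hq0 hq1 hN).
  assert (hbin : Cmod (gbinom (sigma, v) (S r)) <= G * E).
  { eapply Rle_trans; [apply Cmod_gbinom_le|].
    apply Rmult_le_compat_l.
    - left. apply prod_1n_harmonic_pos, Rabs_pos.
    - apply prod_sqrt_le_exp, Rabs_pos. }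
  assert (hpow : (q ^ N) ^ S r <= q ^ N * q ^ r).
  { simpl. apply Rmult_le_compat_l; [lra|]. apply pow_incr. lra. }
  assert (hden : / Cmod (1 - qpow q (t + RtoC (INR (S r)))) <= / inf_dist q t).
  { apply Rinv_le_contravar; [exact hd | apply Hd; lia]. }
  apply Rle_trans with (G * E * (Rq * (q ^ N * q ^ r)) * / inf_dist q t).
  - unfold Rdiv. apply Rmult_le_compat.
    + apply Rmult_le_pos; [apply Cmod_ge_0 | apply Rmult_le_pos, pow_le; lra].
    + left. apply Rinv_0_lt_compat, Cmod_1_sub_qpow_shift_pos.
    + apply Rmult_le_compat; [apply Cmod_ge_0 | apply Rmult_le_pos, pow_le; lra | exact hbin |].
      apply Rmult_le_compat_l; [lra | exact hpow].
    + exact hden.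
  - right. unfold Rdiv. ring.
Qed.

End ZetaTerms.

Lemma exp_growth_absorbs (M A : R) : 1 + exp 2 * M / (PI / 2 - 3 / 2) <= A ->
  exp (5 / 2 * A + 2) * M <= exp ((1 + PI / 2) * A).
Proof.
  intros hA. set (delta := PI / 2 - 3 / 2) in hA |- *.
  assert (hdelta : 0 < delta) by (unfold delta; assert (H := PI2_3_2); lra).
  assert (hM : exp 2 * M <= exp (delta * A)).
  { eapply Rle_trans; [|apply exp_ineq1_le].
    assert (h : exp 2 * M <= delta * (A - 1)).
    { replace (exp 2 * M) with (delta * (exp 2 * M / delta)) by (field; lra).
      apply Rmult_le_compat_l; lra. }
    nra. }
  replace ((1 + PI / 2) * A) with (5 / 2 * A + delta * A) by (unfold delta; field).
  rewrite !exp_plus, Rmult_assoc. apply Rmult_le_compat_l; [left; apply exp_pos | exact hM].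
Qed.

Lemma tail_majorant_le (q M A c a : R) (N : nat) :
  0 < q -> q < 1 -> (1 <= N)%nat -> 0 <= M -> 0 <= a -> A <= c ->
  1 + exp 2 * M / (PI / 2 - 3 / 2) <= A ->
  a * exp (5 / 2 * A + 2) * q ^ N * M
  <= a * exp c * exp (PI / 2 * A)
     * (q ^ N / (1 - q ^ N) + / sqrt A * Rpower q (INR N * A) * (1 + 1 / (- INR N * ln q))).
Proof.
  intros hq0 hq1 hN hM ha hAc hA.
  destruct (pow_le_base q N hq0 hq1 hN) as [hx0 hxq].
  set (x := q ^ N) in *.
  assert (hgrowth : exp (5 / 2 * A + 2) * M <= exp c * exp (PI / 2 * A)).
  { eapply Rle_trans; [exact (exp_growth_absorbs M A hA)|].
    rewrite <- exp_plus. apply exp_le_exp. lra. }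
  assert (hA1 : 1 <= A).
  { assert (0 <= exp 2 * M / (PI / 2 - 3 / 2)); [|lra].
    apply Rdiv_le_0_compat; [apply Rmult_le_pos; [left; apply exp_pos | exact hM] |].
    assert (H := PI2_3_2). lra. }
  assert (hP : 0 <= / sqrt A * Rpower q (INR N * A) * (1 + 1 / (- INR N * ln q))).
  { assert (hlnq : ln q < 0) by (rewrite <- ln_1; apply ln_increasing; lra).
    assert (hNlnq : 0 < 1 / (- INR N * ln q)).
    { apply Rdiv_lt_0_compat; [lra|]. assert (1 <= INR N) by (apply (le_INR 1), hN). nra. }
    apply Rmult_le_pos; [apply Rmult_le_pos | lra].
    - left. apply Rinv_0_lt_compat, sqrt_lt_R0. lra.
    - left. apply exp_pos. }
  assert (hgeom : x <= x / (1 - x)).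
  { apply (Rmult_le_reg_r (1 - x)); [lra|]. field_simplify; nra. }
  replace (a * exp (5 / 2 * A + 2) * x * M) with (a * (exp (5 / 2 * A + 2) * M) * x) by ring.
  rewrite (Rmult_assoc a (exp c)).
  apply Rmult_le_compat; [| lra | apply Rmult_le_compat_l; lra | lra].
  apply Rmult_le_pos; [lra | apply Rmult_le_pos; [left; apply exp_pos | exact hM]].
Qed.

Theorem lemma2p3 (q : R) (hq0 : 0 < q) (hq1 : q < 1) (sigma : R) :
  exists Cst : R, 0 < Cst /\
  forall (N : nat), (1 <= N)%nat ->
  forall t : C,
    ~ (exists a b : Z, (a <= 0)%Z /\ t = (IZR a, 2 * PI * IZR b / ln q)) ->
    exists V : R, forall v : R, V <= Rabs v ->
      let s : C := (sigma, v) in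
      exists L : C, is_series (fun r => zeta_term q s t N r) L /\
      Cmod L <=
        Cst * ( Rpower q (INR N * fst t) / Cmod (1 - qpow q t)%C
              + Rpower q (INR N * fst t) * exp (Cmod s) / inf_dist q t
                * exp (PI / 2 * Rabs v)
                * ( q ^ N / (1 - q ^ N)
                  + / sqrt (Rabs v) * Rpower q (INR N * Rabs v)
                    * (1 + 1 / (- INR N * ln q)))).
Proof.
  set (G r := prod_1n (fun k => 1 + Rabs sigma / INR k) (S r) * q ^ r).
  assert (HG : ex_series G) by (apply ex_series_prod_1n_pow; [apply Rabs_pos | lra | lra]).
  assert (hM : 0 <= Series G).
  { apply Series_nonneg; [exact HG|]. intros r. apply Rmult_le_pos.
    - left. apply prod_1n_harmonic_pos, Rabs_pos.
    - apply pow_le. lra. }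
  exists 1. split; [lra|]. intros N hN t Ht.
  exists (1 + exp 2 * Series G / (PI / 2 - 3 / 2)). intros v hv s.
  destruct (is_series_Cmod_le_head_tail (fun r => zeta_term q s t N r) G
              (Rpower q (INR N * fst t) / inf_dist q t * exp (5 / 2 * Rabs v + 2) * q ^ N)
              HG (fun r => Cmod_zeta_term_S_le q t hq0 hq1 Ht sigma v N r hN))
    as [L [HL HLe]].
  exists L. split; [exact HL|].
  rewrite (Cmod_zeta_term_0 q t hq0 hq1 Ht) in HLe. rewrite Rmult_1_l.
  eapply Rle_trans; [exact HLe|]. apply Rplus_le_compat_l.
  replace (Rpower q (INR N * fst t) * exp (Cmod s) / inf_dist q t)
    with (Rpower q (INR N * fst t) / inf_dist q t * exp (Cmod s)) by (unfold Rdiv; ring).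
  apply tail_majorant_le; [lra | lra | exact hN | exact hM | | | exact hv].
  - destruct (inf_dist_spec q t hq0 hq1 Ht) as [hd _].
    apply Rdiv_le_0_compat; [left; apply exp_pos | exact hd].
  - apply Rle_trans with (Rmax (Rabs sigma) (Rabs v)); [apply Rmax_r | apply (Rmax_Cmod s)].
Qed.
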